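(* Let $(\mathcal F_n)_{n\ge1}$ be a nested sequence of predictor classes such that for every $n$ and every $f_1,f_2\in\mathcal F_n$, the midpoint predictor $\tfrac12(f_1+f_2)$ lies in $\mathcal F_{2n}$. Fix $n\ge1$ and suppose $f_1,f_2\in\mathcal F_n$ satisfy $\mathrm{MSE}(f_i)\le R(\mathcal F_n)+\varepsilon$ for $i\in\{1,2\}$. Then \[ D(f_1,f_2)\le4\big(R(\mathcal F_n)-R(\mathcal F_{2n})+\varepsilon\big). \]
   Context: $P$ is a distribution on $\mathcal X\times\mathcal Y$ with $\mathcal Y\subseteq\mathbb R$; predictors are square-integrable functions $\mathcal X\to\mathbb R$; expectations over $(x,y)\sim P$. $\mathrm{MSE}(f)=\mathbb E[(y-f(x))^2]$, $R(\mathcal F)=\inf_{f\in\mathcal F}\mathrm{MSE}(f)$, $D(f_1,f_2)=\mathbb E[(f_1(x)-f_2(x))^2]$. Nested means $\mathcal F_n\subseteq\mathcal F_{n+1}$. *)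

From HB Require Import structures.
From mathcomp Require Import all_boot all_order all_algebra.
From mathcomp Require Import all_classical all_reals all_analysis.
Set Implicit Arguments. Unset Strict Implicit. Unset Printing Implicit Defensive.
Import Order.TTheory GRing.Theory Num.Theory.
Local Open Scope classical_set_scope.
Local Open Scope ring_scope.
Local Open Scope ereal_scope.

(* P is a probability distribution on X * R (Y is a subset of R, so a
   distribution on X x Y is a distribution on X x R). *)

Definition predictor {d} {X : measurableType d} {R : realType}
  (P : probability (X * R)%type R) (f : X -> R) : Prop :=
  measurable_fun setT f /\ P.-integrable setT (fun z => ((f z.1) ^+ 2)%:E).

Definition MSE {d} {X : measurableType d} {R : realType}
  (P : probability (X * R)%type R) (f : X -> R) : \bar R :=
  \int[P]_z (((z.2 - f z.1) ^+ 2)%R)%:E.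

Definition Risk {d} {X : measurableType d} {R : realType}
  (P : probability (X * R)%type R) (F : set (X -> R)) : \bar R :=
  ereal_inf [set MSE P f | f in F].

Definition Dist {d} {X : measurableType d} {R : realType}
  (P : probability (X * R)%type R) (f1 f2 : X -> R) : \bar R :=
  \int[P]_z (((f1 z.1 - f2 z.1) ^+ 2)%R)%:E.

From HB Require Import structures.
From mathcomp Require Import all_boot all_order all_algebra.
From mathcomp Require Import all_classical all_reals all_analysis.
From mathcomp Require Import ring lra measurable_realfun.
Set Implicit Arguments. Unset Strict Implicit. Unset Printing Implicit Defensive.
Import Order.TTheory GRing.Theory Num.Theory.
Local Open Scope classical_set_scope.
Local Open Scope ring_scope.
Local Open Scope ereal_scope.

(* The midpoint g of f1 and f2 satisfies the parallelogram identity
   4 MSE(g) + D(f1, f2) = 2 MSE(f1) + 2 MSE(f2).  Since g lies in F_(2n),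
   MSE(g) >= R(F_(2n)), while both MSE(f_i) are at most R(F_n) + eps; all
   quantities are finite because y and the predictors are square-integrable. *)

Section SquareIntegrals.
Context d (T : measurableType d) (R : realType) (mu : {measure set T -> \bar R}).

Lemma sqr_EFin_ge0 (x : R) : 0 <= (x ^+ 2)%:E.
Proof. by rewrite lee_fin sqr_ge0. Qed.

Lemma measurable_sqr_EFin (u : T -> R) : measurable_fun setT u ->
  measurable_fun setT ((fun x => (u x ^+ 2)%:E) : T -> \bar R).
Proof. by move=> mfu; apply/measurable_EFinP; exact: measurable_funX. Qed.

Lemma integrable_sqrB (u v : T -> R) :
  measurable_fun setT u -> measurable_fun setT v ->
  mu.-integrable setT (fun x => (u x ^+ 2)%:E) ->
  mu.-integrable setT (fun x => (v x ^+ 2)%:E) ->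
  mu.-integrable setT (fun x => ((u x - v x) ^+ 2)%:E).
Proof.
move=> mfu mfv iu iv.
apply: (le_integrable measurableT _ _ (integrableD measurableT
  (integrableZl measurableT 2 iu) (integrableZl measurableT 2 iv))).
  by apply: measurable_sqr_EFin; exact: measurable_funB.
move=> x _; rewrite -!EFinM -EFinD !abse_EFin lee_fin.
rewrite ger0_norm ?sqr_ge0 // ger0_norm; last by rewrite addr_ge0 // mulr_ge0 // sqr_ge0.
have := sqr_ge0 (u x + v x); nra.
Qed.

Lemma integral_sqrB_midpoint (u v w : T -> R) :
  measurable_fun setT u -> measurable_fun setT v -> measurable_fun setT w ->
  4%:E * \int[mu]_x ((w x - (u x + v x) / 2) ^+ 2)%:E
    + \int[mu]_x ((u x - v x) ^+ 2)%:E
  = 2%:E * \int[mu]_x ((w x - u x) ^+ 2)%:E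
    + 2%:E * \int[mu]_x ((w x - v x) ^+ 2)%:E.
Proof.
move=> mfu mfv mfw.
have msqB (a b : T -> R) : measurable_fun setT a -> measurable_fun setT b ->
    measurable_fun setT ((fun x => ((a x - b x) ^+ 2)%:E) : T -> \bar R).
  by move=> ma mb; apply: measurable_sqr_EFin; exact: measurable_funB.
have mmid : measurable_fun setT (fun x => (u x + v x) / 2)%R.
  by apply: measurable_funM => //; exact: measurable_funD.
rewrite -!ge0_integralZl_EFin //; try by [move=> x _; exact: sqr_EFin_ge0 | exact: msqB].
rewrite -!ge0_integralD //; try by [move=> x _; rewrite ?mule_ge0 ?sqr_EFin_ge0
  | exact: msqB | apply: emeasurable_funM => //; exact: msqB].
by apply: eq_integral => x _; rewrite -!EFinM -!EFinD; congr EFin; field.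
Qed.

End SquareIntegrals.

Lemma le_parallelogram_gap (R : realType) (a b m r s D : \bar R) (e : R) :
  a \is a fin_num -> b \is a fin_num -> m \is a fin_num ->
  4%:E * m + D = 2%:E * a + 2%:E * b ->
  a <= r + e%:E -> b <= r + e%:E -> s <= m ->
  D <= 4%:E * (r - s + e%:E).
Proof.
case: a b m => [a||] // [b||] // [m||] // _ _ _.
case: D => [D||] //=; case: r => [r||] //=; case: s => [s||] //=.
  by rewrite -!EFinM -!EFinD !lee_fin => -[key] h1 h2 h3; lra.
all: by move=> *; rewrite ?addye ?addey // gt0_muley ?leey.
Qed.

Section MeanSquaredError.
Context d (X : measurableType d) (R : realType) (P : probability (X * R)%type R).

Lemma MSE_fin_num (f : X -> R) :
  P.-integrable setT (fun z => (z.2 ^+ 2)%:E) -> predictor P f ->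
  MSE P f \is a fin_num.
Proof.
move=> iy [mf if_]; apply: integrable_fin_num => //.
apply: integrable_sqrB iy if_ => //; exact: measurableT_comp.
Qed.

Lemma Risk_le_MSE (F : set (X -> R)) (f : X -> R) : F f -> Risk P F <= MSE P f.
Proof. by move=> Ff; apply: ereal_inf_lbound; exists f. Qed.

Lemma MSE_midpoint (f1 f2 : X -> R) :
  measurable_fun setT f1 -> measurable_fun setT f2 ->
  4%:E * MSE P (fun x => (f1 x + f2 x) / 2)%R + Dist P f1 f2
  = 2%:E * MSE P f1 + 2%:E * MSE P f2.
Proof.
move=> mf1 mf2.
by apply: integral_sqrB_midpoint => //; exact: measurableT_comp.
Qed.

End MeanSquaredError.

Theorem lemma2 (d : measure_display) (X : measurableType d) (R : realType)
  (P : probability (X * R)%type R)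
  (Hy : P.-integrable setT (fun z => ((z.2 ^+ 2)%R)%:E))
  (F : nat -> set (X -> R))
  (Hpred : forall n, (0 < n)%N -> F n `<=` predictor P)
  (Hnest : forall n, (0 < n)%N -> F n `<=` F n.+1)
  (Hmid : forall n, (0 < n)%N -> forall f1 f2, F n f1 -> F n f2 ->
            F (2 * n)%N (fun x => ((f1 x + f2 x) / 2)%R))
  (n : nat) (hn : (0 < n)%N) (eps : R) (f1 f2 : X -> R)
  (hf1 : F n f1) (hf2 : F n f2)
  (h1 : MSE P f1 <= Risk P (F n) + eps%:E)
  (h2 : MSE P f2 <= Risk P (F n) + eps%:E) :
  Dist P f1 f2 <= 4%:E * (Risk P (F n) - Risk P (F (2 * n)%N) + eps%:E).
Proof.
have Fmid := Hmid n hn _ _ hf1 hf2.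
have [pf1 pf2] := (Hpred n hn _ hf1, Hpred n hn _ hf2).
have pmid : predictor P (fun x => (f1 x + f2 x) / 2)%R.
  by apply: (Hpred (2 * n)%N) Fmid; rewrite muln_gt0 hn.
apply: (le_parallelogram_gap (MSE_fin_num Hy pf1) (MSE_fin_num Hy pf2)
  (MSE_fin_num Hy pmid) _ h1 h2 (Risk_le_MSE P Fmid)).
by rewrite MSE_midpoint //; [case: pf1 | case: pf2].
Qed.
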